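(* Let $N\in\mathbb{N}$, $0\le\mu<L<\infty$, and let $M$ be a method which, for coefficients $\{\alpha_{i,j}\}_{i=1,\dots,N;\,j=0,\dots,i-1}$, generates iterates satisfying $w_k-w_\star=(w_0-w_\star)(1-\frac{\mu}{L}\sum_{i=0}^{k-1}\alpha_{k,i})-\sum_{i=0}^{k-1}\frac{\alpha_{k,i}}{L}\nabla\tilde f(w_i)$, $k=1,\dots,N$, where $\tilde f(x)=f(x)-\frac\mu2\|x-w_\star\|^2$. For any $d\in\mathbb{N}$, $f\in\mathcal{F}_{\mu,L}(\mathbb{R}^d)$, $w_\star\in\arg\min_w f(w)$, initial point $w_0\in\mathbb{R}^d$, and $w_N$ the output of $M$ on $f$ from $w_0$, it holds that $\|w_N-w_\star\|^2\le \mathrm{val}(R)\,\|w_0-w_\star\|^2$, where $\mathrm{val}(R)$ is the optimal value of problem (R) described in the context.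
   Context: $\mathcal{F}_{\mu,L}(\mathbb{R}^d)$ denotes the set of proper closed convex functions $f:\mathbb{R}^d\to\mathbb{R}$ such that for all $x,y$: $f(x)\le f(y)+\langle\nabla f(y);x-y\rangle+\frac L2\|x-y\|^2$ and $f(x)\ge f(y)+\langle\nabla f(y);x-y\rangle+\frac\mu2\|x-y\|^2$. Problem (R): maximize $\|w_N-w_\star\|^2$ over $d\in\mathbb{N}$ and triples $(w_i,g_i,f_i)\in\mathbb{R}^d\times\mathbb{R}^d\times\mathbb{R}$, $i\in\{\star,0,\dots,N\}$, subject to: $\|w_0-w_\star\|^2=1$, $g_\star=0$; $w_k=w_\star+(w_0-w_\star)(1-\frac{\mu}{L}\sum_{i=0}^{k-1}\alpha_{k,i})-\sum_{i=0}^{k-1}\frac{\alpha_{k,i}}{L}g_i$ for $k=1,\dots,N$; $f_i\ge f_{i+1}+\langle g_{i+1};w_i-w_{i+1}\rangle+\frac{1}{2(L-\mu)}\|g_i-g_{i+1}\|^2$ for $i=0,\dots,N-2$; $f_\star\ge f_i+\langle g_i;w_\star-w_i\rangle+\frac{1}{2(L-\mu)}\|g_i\|^2$ for $i=0,\dots,N-1$; and $f_{N-1}\ge f_\star+\frac{1}{2(L-\mu)}\|g_{N-1}\|^2$. *)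

From HB Require Import structures.
From mathcomp Require Import all_boot all_order all_algebra.
From mathcomp Require Import all_classical all_reals all_analysis.
Set Implicit Arguments. Unset Strict Implicit. Unset Printing Implicit Defensive.
Import Order.TTheory GRing.Theory Num.Theory.
Import numFieldNormedType.Exports.
Local Open Scope classical_set_scope.
Local Open Scope ring_scope.

Definition dotv (R : pzRingType) (d : nat) (x y : 'rV[R]_d) : R :=
  \sum_(i < d) x 0 i * y 0 i.
Definition sqn (R : pzRingType) (d : nat) (x : 'rV[R]_d) : R := dotv x x.

Definition in_FmuL (R : realType) (d : nat) (mu L : R)
    (f : 'rV[R]_d -> R) (gf : 'rV[R]_d -> 'rV[R]_d) : Prop :=
  (forall x, differentiable f x /\ forall h, 'd f x h = dotv (gf x) h) /\
  (forall x y (t : R), 0 <= t <= 1 ->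
      f (t *: x + (1 - t) *: y) <= t * f x + (1 - t) * f y) /\
  (forall x y, f x <= f y + dotv (gf y) (x - y) + L / 2 * sqn (x - y)) /\
  (forall x y, f x >= f y + dotv (gf y) (x - y) + mu / 2 * sqn (x - y)).

(* Iterates generated by the method M with coefficients alpha (alpha k i,
   k = 1..N, i = 0..k-1), written in terms of the gradient of
   f~(x) = f(x) - mu/2 ||x - ws||^2, i.e. grad f~(x) = gf x - mu (x - ws). *)
Definition method_iterates (R : realType) (d N : nat) (mu L : R)
    (alpha : nat -> nat -> R) (gf : 'rV[R]_d -> 'rV[R]_d) (ws : 'rV[R]_d)
    (w : nat -> 'rV[R]_d) : Prop :=
  forall k, (1 <= k <= N)%N ->
    w k - ws = (1 - mu / L * \sum_(i < k) alpha k i) *: (w 0%N - ws)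
               - \sum_(i < k) (alpha k i / L) *: (gf (w i) - mu *: (w i - ws)).

Definition R_feasible (R : realType) (N : nat) (mu L : R)
    (alpha : nat -> nat -> R) (v : R) : Prop :=
  exists (d : nat) (ws gs : 'rV[R]_d) (fs : R)
         (w g : nat -> 'rV[R]_d) (fv : nat -> R),
    sqn (w 0%N - ws) = 1 /\ gs = 0 /\
        (forall k, (1 <= k <= N)%N ->
           w k = ws + (1 - mu / L * \sum_(i < k) alpha k i) *: (w 0%N - ws)
                 - \sum_(i < k) (alpha k i / L) *: g i) /\
        (forall i, (i.+2 <= N)%N ->
           fv i >= fv i.+1 + dotv (g i.+1) (w i - w i.+1)
                   + 1 / (2 * (L - mu)) * sqn (g i - g i.+1)) /\
        (forall i, (i < N)%N ->
           fs >= fv i + dotv (g i) (ws - w i) + 1 / (2 * (L - mu)) * sqn (g i)) /\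
        fv N.-1 >= fs + 1 / (2 * (L - mu)) * sqn (g N.-1) /\
    v = sqn (w N - ws).

Definition val_R (R : realType) (N : nat) (mu L : R) (alpha : nat -> nat -> R)
  : \bar R :=
  ereal_sup (EFin @` [set v | R_feasible N mu L alpha v]).

(* Subtracting [mu/2 ||x - ws||^2] turns [f] into a convex, [(L - mu)]-smooth
   function [ft] with gradient [gf x - mu (x - ws)], and the method is written in
   terms of this gradient.  Convexity and smoothness of [ft] yield the
   interpolation inequality
     [ft x >= ft y + <G y, x - y> + ||G x - G y||^2 / (2 (L - mu))],
   whose instances along the iterates (and at [ws], where [G ws = 0]) are exactly
   the constraints of (R) on the triples [(w_i, G w_i, ft w_i)].  All of them are
   homogeneous of degree two, so rescaling the triples by [1 / ||w_0 - ws||]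
   gives a feasible point of (R) with value [||w_N - ws||^2 / ||w_0 - ws||^2]. *)

From HB Require Import structures.
From mathcomp Require Import all_boot all_order all_algebra.
From mathcomp Require Import all_classical all_reals all_analysis.
From mathcomp Require Import lra ring.
Import Order.TTheory GRing.Theory Num.Theory.
Import numFieldNormedType.Exports.
Local Open Scope classical_set_scope.
Local Open Scope ring_scope.

Section DotProduct.
Context {R : comPzRingType} {d : nat}.
Implicit Types x y z : 'rV[R]_d.

Lemma dotvC x y : dotv x y = dotv y x.
Proof. by apply: eq_bigr => i _; rewrite mulrC. Qed.

Lemma dotvDl x y z : dotv (x + y) z = dotv x z + dotv y z.
Proof. by rewrite /dotv -big_split; apply: eq_bigr => i _; rewrite mxE mulrDl. Qed.

Lemma dotvZl (a : R) x y : dotv (a *: x) y = a * dotv x y.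
Proof. by rewrite /dotv mulr_sumr; apply: eq_bigr => i _; rewrite mxE mulrA. Qed.

Lemma dotvNl x y : dotv (- x) y = - dotv x y.
Proof. by rewrite -scaleN1r dotvZl mulN1r. Qed.

Lemma dotv0l y : dotv 0 y = 0.
Proof. by rewrite -(scale0r 0) dotvZl mul0r. Qed.

Lemma dotvDr x y z : dotv z (x + y) = dotv z x + dotv z y.
Proof. by rewrite dotvC dotvDl !(dotvC z). Qed.

Lemma dotvZr (a : R) x y : dotv y (a *: x) = a * dotv y x.
Proof. by rewrite dotvC dotvZl dotvC. Qed.

Lemma dotvNr x y : dotv y (- x) = - dotv y x.
Proof. by rewrite dotvC dotvNl dotvC. Qed.

Lemma sqnZ (a : R) x : sqn (a *: x) = a ^+ 2 * sqn x.
Proof. by rewrite /sqn dotvZl dotvZr mulrA expr2. Qed.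

Lemma sqnN x : sqn (- x) = sqn x.
Proof. by rewrite /sqn dotvNl dotvNr opprK. Qed.

Lemma sqnD x y : sqn (x + y) = sqn x + 2 * dotv x y + sqn y.
Proof. by rewrite /sqn !(dotvDl, dotvDr) (dotvC y x); ring. Qed.

End DotProduct.

Section SquaredNorm.
Context {R : realDomainType} {d : nat}.
Implicit Types x : 'rV[R]_d.

Lemma sqn_ge0 x : 0 <= sqn x.
Proof. by apply: sumr_ge0 => i _; rewrite -expr2 sqr_ge0. Qed.

Lemma sqn_eq0 x : sqn x = 0 -> x = 0.
Proof.
move=> x0; apply/rowP => j; rewrite mxE.
have sq_sum0 : \sum_(i < d) x 0 i ^+ 2 = 0.
  by rewrite -[RHS]x0; apply: eq_bigr => i _; rewrite expr2.
apply/eqP; rewrite -sqrf_eq0; apply/eqP.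
by apply: (psumr_eq0P _ sq_sum0) => // i _; apply: sqr_ge0.
Qed.

End SquaredNorm.

Section Interpolation.
Context {R : realFieldType} {d : nat}.
Implicit Types x y : 'rV[R]_d.

(* Compare [h] at [x] and at the gradient step [z = x - (G x - G y) / Lp]:
   convexity bounds [h z] from below through [y], smoothness from above through [x]. *)
Lemma convex_smooth_interpolation {h : 'rV[R]_d -> R} {G : 'rV[R]_d -> 'rV[R]_d}
    {Lp : R} :
  0 < Lp ->
  (forall x y, h y + dotv (G y) (x - y) <= h x) ->
  (forall x y, h x <= h y + dotv (G y) (x - y) + Lp / 2 * sqn (x - y)) ->
  forall x y, h y + dotv (G y) (x - y) + 1 / (2 * Lp) * sqn (G x - G y) <= h x.
Proof.
move=> Lp_gt0 h_lb h_ub x y.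
set u := G x - G y; set z := x - Lp^-1 *: u.
have := h_lb z y; have := h_ub z x.
have -> : z - x = (- Lp^-1) *: u by rewrite /z addrAC subrr add0r scaleNr.
have -> : z - y = (x - y) + (- Lp^-1) *: u by rewrite /z addrAC scaleNr.
rewrite dotvDr !dotvZr sqnZ.
have Gu : dotv (G x) u = dotv (G y) u + sqn u.
  by rewrite /sqn {3}/u dotvDl dotvNl; ring.
have -> : Lp / 2 * ((- Lp^-1) ^+ 2 * sqn u) = Lp^-1 / 2 * sqn u.
  by field; rewrite gt_eqF.
have -> : 1 / (2 * Lp) = Lp^-1 / 2 by field; rewrite gt_eqF.
rewrite Gu; lra.
Qed.

Lemma grad_eq0_at_min {f : 'rV[R]_d -> R} {gf : 'rV[R]_d -> 'rV[R]_d} {L : R}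
    {ws : 'rV[R]_d} :
  0 < L ->
  (forall x y, f x <= f y + dotv (gf y) (x - y) + L / 2 * sqn (x - y)) ->
  (forall x, f ws <= f x) -> gf ws = 0.
Proof.
move=> L_gt0 f_ub ws_min; set g := gf ws.
have := f_ub (ws - L^-1 *: g) ws; have := ws_min (ws - L^-1 *: g).
have -> : ws - L^-1 *: g - ws = - (L^-1 *: g) by rewrite addrAC subrr add0r.
rewrite dotvNr dotvZr sqnN sqnZ.
have -> : L / 2 * (L^-1 ^+ 2 * sqn g) = L^-1 / 2 * sqn g by field; rewrite gt_eqF.
have Linv_gt0 : 0 < L^-1 by rewrite invr_gt0.
have := sqn_ge0 g; rewrite /sqn => g_ge0 min ub.
apply: sqn_eq0; rewrite /sqn; nra.
Qed.

End Interpolation.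

Section ShiftedFunction.
Context {R : realFieldType} {d : nat} (mu : R) (ws : 'rV[R]_d).
Context (f : 'rV[R]_d -> R) (gf : 'rV[R]_d -> 'rV[R]_d).
Implicit Types x y : 'rV[R]_d.

Definition shifted x := f x - mu / 2 * sqn (x - ws).
Definition shifted_grad x := gf x - mu *: (x - ws).

Lemma sqn_sub_center x y :
  sqn (x - ws) = sqn (y - ws) + 2 * dotv (y - ws) (x - y) + sqn (x - y).
Proof. by rewrite -sqnD [_ + (x - y)]addrC addrA subrK. Qed.

Lemma dotv_shifted_grad x y :
  dotv (shifted_grad y) (x - y) = dotv (gf y) (x - y) - mu * dotv (y - ws) (x - y).
Proof. by rewrite dotvDl dotvNl dotvZl. Qed.

Lemma shifted_lb :
  (forall x y, f x >= f y + dotv (gf y) (x - y) + mu / 2 * sqn (x - y)) ->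
  forall x y, shifted y + dotv (shifted_grad y) (x - y) <= shifted x.
Proof.
move=> f_lb x y; have := f_lb x y.
by rewrite /shifted dotv_shifted_grad (sqn_sub_center x y); lra.
Qed.

Lemma shifted_ub (L : R) :
  (forall x y, f x <= f y + dotv (gf y) (x - y) + L / 2 * sqn (x - y)) ->
  forall x y,
    shifted x <=
      shifted y + dotv (shifted_grad y) (x - y) + (L - mu) / 2 * sqn (x - y).
Proof.
move=> f_ub x y; have := f_ub x y.
by rewrite /shifted dotv_shifted_grad (sqn_sub_center x y); lra.
Qed.

Lemma shifted_grad_center : gf ws = 0 -> shifted_grad ws = 0.
Proof. by move=> g0; rewrite /shifted_grad g0 subrr scaler0 subrr. Qed.

End ShiftedFunction.

Section Method.
Context {R : realType} {d N : nat} {mu L : R} {alpha : nat -> nat -> R}.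
Context {f : 'rV[R]_d -> R} {gf : 'rV[R]_d -> 'rV[R]_d} {ws : 'rV[R]_d}.
Context {w : nat -> 'rV[R]_d}.
Implicit Types x y : 'rV[R]_d.
Hypothesis hw : method_iterates N mu L alpha gf ws w.
Hypothesis grad_ws : gf ws = 0.

Lemma method_iterates_from_min : w 0%N = ws -> forall k, (k <= N)%N -> w k = ws.
Proof.
move=> w0; elim/ltn_ind => -[|k] IH kN //.
apply/eqP; rewrite -subr_eq0 hw // w0 subrr scaler0 sub0r oppr_eq0.
apply/eqP/big1 => i _.
rewrite (IH i) ?(leq_trans (ltnW (ltn_ord i)) kN) //.
by rewrite subrr scaler0 grad_ws subrr scaler0.
Qed.

Hypothesis hmuL : mu < L.
Hypothesis hf : in_FmuL mu L f gf.

Local Notation ft := (shifted mu ws f).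
Local Notation G := (shifted_grad mu ws gf).

Lemma scaled_interpolation (c : R) x y :
  c ^+ 2 * ft y + dotv (c *: G y) (c *: (x - ws) - c *: (y - ws))
    + 1 / (2 * (L - mu)) * sqn (c *: G x - c *: G y) <= c ^+ 2 * ft x.
Proof.
have Lmu_gt0 : 0 < L - mu by rewrite subr_gt0.
have interp := convex_smooth_interpolation Lmu_gt0
  (shifted_lb mu ws f gf hf.2.2.2) (shifted_ub mu ws f gf L hf.2.2.1) x y.
rewrite -!scalerBr.
have -> : x - ws - (y - ws) = x - y by rewrite opprB addrA subrK.
rewrite dotvZl dotvZr sqnZ.
by have := ler_wpM2l (sqr_ge0 c) interp; lra.
Qed.

Lemma R_feasible_rescaled :
  0 < sqn (w 0%N - ws) ->
  R_feasible N mu L alpha (sqn (w N - ws) / sqn (w 0%N - ws)).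
Proof.
set s := sqn (w 0%N - ws) => s_gt0; set c := Num.sqrt s^-1.
have c2 : c ^+ 2 = s^-1 by rewrite sqr_sqrtr // invr_ge0 ltW.
have G0 : c *: G ws = 0 by rewrite shifted_grad_center ?scaler0.
exists d, 0, 0, (c ^+ 2 * ft ws), (fun i => c *: (w i - ws)),
  (fun i => c *: G (w i)), (fun i => c ^+ 2 * ft (w i)).
split; first by rewrite subr0 sqnZ c2 mulVf // gt_eqF.
split=> //; split.
  move=> k kN; rewrite hw // add0r subr0 scalerBr scalerA mulrC -scalerA.
  rewrite scaler_sumr.
  by congr (_ - _); apply: eq_bigr => i _; rewrite !scalerA mulrC.
split; first by move=> i _; apply: scaled_interpolation.
split.
  move=> i _; have := scaled_interpolation c ws (w i).
  by rewrite subrr scaler0 G0 !sub0r sqnN.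
split.
  by have := scaled_interpolation c (w N.-1) ws; rewrite G0 dotv0l addr0 subr0.
by rewrite subr0 sqnZ c2 mulrC.
Qed.

End Method.

Theorem lemma4 (R : realType) (N : nat) (mu L : R) (alpha : nat -> nat -> R)
  (hmu : 0 <= mu) (hmuL : mu < L)
  (d : nat) (f : 'rV[R]_d -> R) (gf : 'rV[R]_d -> 'rV[R]_d)
  (hf : in_FmuL mu L f gf)
  (ws : 'rV[R]_d) (hws : forall x, f ws <= f x)
  (w : nat -> 'rV[R]_d) (hw : method_iterates N mu L alpha gf ws w) :
  ((sqn (w N - ws))%:E <= val_R N mu L alpha * (sqn (w 0%N - ws))%:E)%E.
Proof.
have L_gt0 : 0 < L by lra.
have grad_ws : gf ws = 0 := grad_eq0_at_min L_gt0 hf.2.2.1 hws.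
have := sqn_ge0 (w 0%N - ws); rewrite le_eqVlt => /predU1P[s0 | s_gt0].
  have w0 : w 0%N = ws by apply/subr0_eq/sqn_eq0; rewrite -s0.
  rewrite (method_iterates_from_min hw grad_ws w0 N (leqnn N)).
  by move: s0; rewrite w0 => <-; rewrite mule0.
have val_ge : ((sqn (w N - ws) / sqn (w 0%N - ws))%:E <= val_R N mu L alpha)%E.
  by apply: ereal_sup_ubound; exists (sqn (w N - ws) / sqn (w 0%N - ws));
    first exact: R_feasible_rescaled hw grad_ws hmuL hf s_gt0.
rewrite -[X in (X%:E <= _)%E](divfK (lt0r_neq0 s_gt0)) EFinM.
by apply: lee_wpmul2r; rewrite // lee_fin ltW.
Qed.
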